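(* Let $p\geq1$, let $\tau$ be Lebesgue measure on $\mathbb R$, let $\alpha(t)=t+1$, let $w:\mathbb R\to(0,\infty)$ be continuous with $w$ and $1/w$ bounded, and let $T_{\alpha,w}f:=w\cdot(f\circ\alpha)$ on $L^p(\mathbb R,\tau)$. Suppose there is $l\in\mathbb Z$ with $$\beta:=\inf\Big\{\prod_{k=1}^n(w\circ\alpha^{-k})(t):\ t\in[l,l+1],\ n\in\mathbb N\Big\}>0,$$ and let $N\in\mathbb N$ be such that $\alpha^n([l,l+1])\cap[l,l+1]=\varnothing$ for all $n\geq N$. Then the set $$\{f\in L^p(\mathbb R,\tau):\ \|T_{\alpha,w}^nf-\chi_{[l,l+1]}\|_p\geq1\ \text{for all } n\geq N\}$$ is not $\sigma$-porous in $L^p(\mathbb R,\tau)$.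
   Context: $\alpha^{n}(t)=t+n$ and $\alpha^{-k}(t)=t-k$. Porosity: Let $X$ be a metric space and $0<\lambda<1$. A set $E\subseteq X$ is $\lambda$-porous at $x\in E$ if for each $\delta>0$ there is $y\in B(x;\delta)\setminus\{x\}$ with $B(y;\lambda\, d(x,y))\cap E=\varnothing$; $E$ is $\lambda$-porous if it is $\lambda$-porous at each of its points; $E$ is $\sigma$-$\lambda$-porous if it is a countable union of $\lambda$-porous subsets of $X$. A set is called $\sigma$-porous if it is $\sigma$-$\lambda$-porous for some $\lambda\in(0,1)$; ''not $\sigma$-porous'' means not $\sigma$-$\lambda$-porous for any $\lambda\in(0,1)$. *)

From HB Require Import structures.
From mathcomp Require Import all_boot all_order all_algebra.
From mathcomp Require Import all_classical all_reals all_analysis.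
Set Implicit Arguments. Unset Strict Implicit. Unset Printing Implicit Defensive.
Import Order.TTheory GRing.Theory Num.Theory.
Local Open Scope classical_set_scope.
Local Open Scope ring_scope.

(* Since L^p consists of a.e.-classes, we work with
   representatives; "y <> x" in the quotient is rendered as 0 < d x y. *)
Definition porous_at (M : Type) (R : realType) (X : set M) (d : M -> M -> R)
  (lam : R) (E : set M) (x : M) : Prop :=
  forall delta : R, 0 < delta ->
    exists y, X y /\ 0 < d x y /\ d x y < delta /\
      (forall z, X z -> d y z < lam * d x y -> ~ E z).

Definition porous (M : Type) (R : realType) (X : set M) (d : M -> M -> R)
  (lam : R) (E : set M) : Prop :=
  forall x, E x -> porous_at X d lam E x.

Definition sigma_porous (M : Type) (R : realType) (X : set M)
  (d : M -> M -> R) (lam : R) (E : set M) : Prop :=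
  exists F : nat -> set M, (forall n, porous X d lam (F n)) /\
    E = \bigcup_n F n.

Definition sigma_porous_any (M : Type) (R : realType) (X : set M)
  (d : M -> M -> R) (E : set M) : Prop :=
  exists lam : R, 0 < lam /\ lam < 1 /\ sigma_porous X d lam E.

Definition Lp (R : realType) (p : R) : set (R -> R) :=
  [set f | measurable_fun [set: R] f /\
           ('N[@lebesgue_measure R]_(p%:E) [EFin \o f] < +oo)%E].

Definition Lpdist (R : realType) (p : R) (f g : R -> R) : R :=
  fine ('N[@lebesgue_measure R]_(p%:E) [EFin \o (f \- g)]).

Definition Twc (R : realType) (w : R -> R) (f : R -> R) : R -> R :=
  fun t => w t * f (t + 1).

From HB Require Import structures.
From mathcomp Require Import all_boot all_order all_algebra.
From mathcomp Require Import all_classical all_reals all_analysis.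
From mathcomp Require Import measurable_realfun lra.
Import Order.TTheory GRing.Theory Num.Theory numFieldNormedType.Exports.
Local Open Scope classical_set_scope.
Local Open Scope ring_scope.

(* A closed ball of positive radius in the complete metric space L^p is not
   sigma-porous: a porous set leaves, near any point, a hole of comparable size,
   so one can pick nested closed balls, the k-th one missing the k-th porous
   piece, and completeness yields a point of the first ball lying in no piece.
   It remains to see that the set contains the closed unit ball around
   c := (1/beta + 1) chi_J, J := [l, l+1].  For z in that ball,
   ||z chi_J||_p >= 1/beta.  Now (T^n z)(t) = (prod_(k=1..n) w (t+n-k)) z (t+n),
   and for t + n in J the weight is at least beta while chi_J t = 0 (n >= N);
   by translation invariance of Lebesgue measure,
   ||T^n z - chi_J||_p >= beta ||z chi_J||_p >= 1. *)

Section SigmaPorosity.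
Context {M : Type} {R : realType} {X : set M} {d : M -> M -> R}.
Hypothesis d_xx : forall x, d x x = 0.
Hypothesis d_triangle : forall x y z, X x -> X y -> X z -> d x z <= d x y + d y z.

Lemma porous_ball_avoid (lam : R) (F : set M) (c : M) (r : R) :
  0 < lam -> lam < 1 -> porous X d lam F -> F `<=` X -> X c -> 0 < r ->
  exists c' r', [/\ X c', 0 < r', d c c' + r' <= r &
    forall z, X z -> d c' z <= r' -> ~ F z].
Proof.
move=> lam_gt0 lam_lt1 Fpor FX Xc r_gt0.
have [[x [Fx dcx]]|noF] := pselect (exists x, F x /\ d c x < r / 2); last first.
  exists c, (r / 4); split => //; first by rewrite divr_gt0.
    by rewrite d_xx add0r ler_pdivrMr // ler_pMr // ler1n.
  move=> z Xz dcz Fz; apply: noF; exists z; split => //.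
  by apply: le_lt_trans dcz _; rewrite ltr_pM2l // ltf_pV2 ?posrE // ltr_nat.
have [y [Xy [dxy0 [dxy hole]]]] := Fpor x Fx _ (divr_gt0 r_gt0 (ltr0n _ 4)).
exists y, (lam * d x y / 2); split => //.
- by rewrite divr_gt0 // mulr_gt0.
- have := @d_triangle c x y Xc (FX _ Fx) Xy.
  have : lam * d x y <= d x y by rewrite ler_piMl ?ltW.
  lra.
- move=> z Xz dyz; apply: hole => //; apply: le_lt_trans dyz _.
  by rewrite ltr_pdivrMr // ltr_pMr ?ltr1n // mulr_gt0.
Qed.

Hypothesis d_complete : forall (c : nat -> M) (B : nat -> R),
  (forall k, X (c k)) ->
  (forall k m, \sum_(0 <= j < m) d (c (k + j)%N) (c (k + j).+1) <= B k) ->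
  exists f, X f /\ forall k, d (c k) f <= B k.

Lemma ball_not_sigma_porous (E : set M) (c0 : M) (r0 : R) :
  X c0 -> 0 < r0 -> (forall z, X z -> d c0 z <= r0 -> E z) -> E `<=` X ->
  ~ sigma_porous_any X d E.
Proof.
move=> Xc0 r0_gt0 ballE EX [lam [lam_gt0 [lam_lt1 [F [Fpor EF]]]]].
have FX k : F k `<=` X by move=> x Fx; apply: EX; rewrite EF; exists k.
have step (kc : nat * (M * R)) : exists cr : M * R, X kc.2.1 -> 0 < kc.2.2 ->
    [/\ X cr.1, 0 < cr.2, d kc.2.1 cr.1 + cr.2 <= kc.2.2 &
     forall z, X z -> d cr.1 z <= cr.2 -> ~ F kc.1 z].
  case: kc => k [c r] /=.
  have [Xc|] := pselect (X c); last by exists (c, r).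
  have [r_gt0|] := pselect (0 < r); last by exists (c, r).
  have [c' [r' ?]] :=
    @porous_ball_avoid lam (F k) c r lam_gt0 lam_lt1 (Fpor k) (FX k) Xc r_gt0.
  by exists (c', r').
have [next hnext] := choice step.
pose s := fix s n := if n is k.+1 then next (k, s k) else (c0, r0).
have s_ball k : X (s k).1 /\ 0 < (s k).2.
  by elim: k => [|k [Xk rk]] //=; have [] := hnext (k, s k) Xk rk.
have s_next k : d (s k).1 (s k.+1).1 + (s k.+1).2 <= (s k).2 /\
    forall z, X z -> d (s k.+1).1 z <= (s k.+1).2 -> ~ F k z.
  by have [Xk rk] := s_ball k; have [] := hnext (k, s k) Xk rk.
have s_steps k m : \sum_(0 <= j < m) d (s (k + j)%N).1 (s (k + j).+1).1
    <= (s k).2 - (s (k + m)%N).2.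
  elim: m => [|m IH]; first by rewrite big_geq // addn0 subrr.
  rewrite big_nat_recr //= addnS; have [+ _] := s_next (k + m)%N; lra.
have [f [Xf sf]] : exists f, X f /\ forall k, d (s k).1 f <= (s k).2.
  apply: d_complete => [k|k m]; first exact: (s_ball k).1.
  by apply: le_trans (s_steps k m) _; rewrite gerBl ltW // (s_ball _).2.
have [k _ Fkf] : (\bigcup_k F k) f by rewrite -EF; exact: ballE (sf 0%N).
exact: (s_next k).2 f Xf (sf k.+1) Fkf.
Qed.

End SigmaPorosity.

Lemma cvgn_bounded_variation {R : realType} (u : nat -> R) (k : nat) (h : R) :
  (forall m, \sum_(0 <= j < m) `|u (k + j).+1 - u (k + j)%N| <= h) ->
  cvgn u /\ `|u k - limn u| <= h.
Proof.
move=> hb; pose du j := u (k + j).+1 - u (k + j)%N.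
have cvg_du : cvgn [normed series du].
  apply: nondecreasing_is_cvgn.
    by apply: nondecreasing_series => j _; rewrite normr_ge0.
  by exists h => _ [m _ <-]; exact: hb.
have u_shift : (fun m => u (m + k)%N) = (fun m => u k + series du m).
  apply/funext; elim => [|m IH]; first by rewrite /series /= big_geq // addr0.
  rewrite /series /= big_nat_recr //= -/(series du m) addrA -IH /du.
  by rewrite addSn (addnC m) addrC subrK.
have cvg_u : u @ \oo --> u k + limn (series du).
  rewrite -(cvg_shiftn k) u_shift.
  by apply: cvgD; [exact: cvg_cst | exact: normed_cvg].
split; first by apply/cvg_ex; eexists; exact: cvg_u.
rewrite (cvg_lim _ cvg_u) // opprD addrA subrr add0r normrN.
apply: le_trans (lim_series_norm cvg_du) _.
by apply: limr_le => //; apply: nearW => m; exact: hb.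
Qed.

Section Translation.
Context {R : realType}.
Local Notation mu := (@lebesgue_measure R).

Lemma measurable_addr (a : R) : measurable_fun setT (fun t : R => t + a).
Proof. by apply: measurable_funD => //; exact: measurable_cst. Qed.

Lemma ge0_integral_addr (a : R) (h : R -> \bar R) : measurable_fun setT h ->
  (forall t, 0 <= h t)%E -> (\int[mu]_t h (t + a)%R = \int[mu]_t h t)%E.
Proof.
move=> mh h0.
have maddr : measurable_fun (T:=measurableTypeR R) (U:=measurableTypeR R) setT
  (fun t => t + a) := measurable_addr a.
pose nu := measure_function_pushforward__canonical__measure_function_Measure mu maddr.
have mu_nu A : measurable A -> mu A = nu A.
  apply: lebesgue_measure_unique => _ [[x1 x2] _ <-].
  rewrite /nu /= /pushforward.
  have -> : (fun t : R => t + a) @^-1` `]x1, x2] = `]x1 - a, x2 - a]%classic.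
    by apply/seteqP; split => t /=; rewrite !in_itv /= => /andP[? ?];
      apply/andP; split; lra.
  rewrite !lebesgue_measure_itv /= !lte_fin ltrBlDr subrK.
  by case: ifP => // _; rewrite -!EFinD; congr (_%:E); lra.
have := ge0_integral_pushforward maddr mu measurableT mh (fun t _ => h0 t).
rewrite preimage_setT => <-.
by apply: eq_measure_integral => A mA _; exact: (esym (mu_nu A mA)).
Qed.

End Translation.

Lemma iter_TwcE (R : realType) (w z : R -> R) (n : nat) (t : R) :
  iter n (Twc w) z t = (\prod_(1 <= k < n.+1) w (t + n%:R - k%:R)) * z (t + n%:R).
Proof.
elim: n t => [|n IH] t; first by rewrite big_geq // mul1r addr0.
rewrite iterS /Twc IH [in RHS]big_nat_recr //= mulrA [w t * _]mulrC.
congr (_ * _ * _).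
- by apply: eq_bigr => k _; congr (w _); rewrite -natr1; lra.
- by congr (w _); lra.
- by rewrite -natr1; congr (z _); lra.
Qed.

Lemma measurable_iter_Twc (R : realType) (w z : R -> R) (n : nat) :
  measurable_fun setT w -> measurable_fun setT z ->
  measurable_fun setT (iter n (Twc w) z).
Proof.
move=> mw mz; elim: n => [|n IH] //=.
apply: measurable_funM; first exact: mw.
exact: measurableT_comp IH (measurable_addr 1).
Qed.

Section LpDistance.
Context {R : realType} {p : R}.
Hypothesis p_ge1 : 1 <= p.
Local Notation mu := (@lebesgue_measure R).
Local Notation "''N_p' [ f ]" := ('N[mu]_(p%:E)[EFin \o (f)%R])%E
  (format "''N_p' [ f ]").
Local Notation "''I_p' [ f ]" := (\int[mu]_x (`|(f)%R x| `^ p)%:E)%E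
  (format "''I_p' [ f ]").

Let p_gt0 : 0 < p. Proof. exact: lt_le_trans p_ge1. Qed.
Let p_ge0 : 0 <= p. Proof. exact: ltW. Qed.
Let p_neq0 : p != 0. Proof. by rewrite gt_eqF. Qed.

Lemma measurable_powR_norm (f : R -> R) : measurable_fun setT f ->
  measurable_fun setT (fun x => (`|f x| `^ p)%:E).
Proof.
move=> mf; apply/measurable_EFinP.
by apply: (measurableT_comp (measurable_powR _)); exact: measurableT_comp.
Qed.

Lemma LnormE (f : R -> R) : 'N_p[f] = ('I_p[f] `^ p^-1)%E.
Proof. by rewrite unlock. Qed.

Lemma poweR_Lnorm_integral (f : R -> R) : ('N_p[f] `^ p)%E = 'I_p[f].
Proof. by rewrite poweR_Lnorm. Qed.

Lemma integral_powR_norm_ge0 (f : R -> R) : (0 <= 'I_p[f])%E.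
Proof. by apply: integral_ge0 => x _; rewrite lee_fin powR_ge0. Qed.

Lemma Lnorm_le_norm {f g : R -> R} : measurable_fun setT f -> measurable_fun setT g ->
  (forall x, `|f x| <= `|g x|) -> ('N_p[f] <= 'N_p[g])%E.
Proof.
move=> mf mg fg; rewrite !LnormE; apply: gt0_ler_poweR.
- by rewrite invr_ge0.
- by rewrite in_itv /= leey andbT integral_powR_norm_ge0.
- by rewrite in_itv /= leey andbT integral_powR_norm_ge0.
apply: ge0_le_integral => //; try exact: measurable_powR_norm.
by move=> x _; rewrite lee_fin; apply: ge0_ler_powR; rewrite ?nnegrE.
Qed.

Lemma Lnorm_eq_norm {f g : R -> R} : measurable_fun setT f -> measurable_fun setT g ->
  (forall x, `|f x| = `|g x|) -> 'N_p[f] = 'N_p[g].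
Proof.
by move=> mf mg fg; apply/le_anti/andP; split; apply: Lnorm_le_norm => // x; rewrite fg.
Qed.

Lemma Lp_measurable {f : R -> R} : Lp p f -> measurable_fun setT f.
Proof. by case. Qed.

Lemma Lp_Lnorm_fin_num {f : R -> R} : Lp p f -> 'N_p[f] \is a fin_num.
Proof. by case=> _ fp; rewrite ge0_fin_numE // Lnorm_ge0. Qed.

Lemma Lp_integral {f : R -> R} : measurable_fun setT f -> ('I_p[f] < +oo)%E -> Lp p f.
Proof. by move=> mf fp; split => //; rewrite LnormE; exact: poweR_lty. Qed.

Lemma Lp_integral_lty {f : R -> R} : Lp p f -> ('I_p[f] < +oo)%E.
Proof. by case=> _ fp; rewrite -poweR_Lnorm_integral; exact: poweR_lty. Qed.

Lemma LpD {f g : R -> R} : Lp p f -> Lp p g -> Lp p (f \+ g).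
Proof.
move=> fp gp; have [mf mg] := (Lp_measurable fp, Lp_measurable gp).
split; first exact: measurable_funD.
apply: le_lt_trans (minkowski_EFin mu mf mg p_ge1) _.
by apply: lte_add_pinfty; [case: fp | case: gp].
Qed.

Lemma LpN {f : R -> R} : Lp p f -> Lp p (\- f).
Proof.
move=> fp; have mf := Lp_measurable fp.
have mNf : measurable_fun setT (\- f) by exact: measurableT_comp.
split => //; rewrite (Lnorm_eq_norm mNf mf) => [|x]; [by case: fp | exact: normrN].
Qed.

Lemma LpB {f g : R -> R} : Lp p f -> Lp p g -> Lp p (f \- g).
Proof. by move=> fp gp; apply: LpD fp (LpN gp). Qed.

Lemma Lpdist_Lnorm {f g : R -> R} : Lp p f -> Lp p g ->
  (Lpdist p f g)%:E = 'N_p[f \- g].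
Proof. by move=> fp gp; rewrite /Lpdist fineK // Lp_Lnorm_fin_num //; exact: LpB. Qed.

Lemma Lpdist_xx (f : R -> R) : Lpdist p f f = 0.
Proof.
rewrite /Lpdist (_ : EFin \o (f \- f) = cst 0%E); last first.
  by apply/funext => t /=; rewrite subrr.
by rewrite Lnorm0.
Qed.

Lemma Lpdist_sym {f g : R -> R} : Lp p f -> Lp p g -> Lpdist p f g = Lpdist p g f.
Proof.
move=> fp gp; apply: EFin_inj; rewrite !Lpdist_Lnorm //.
by apply: Lnorm_eq_norm => [||x]; [exact: Lp_measurable (LpB fp gp)|
  exact: Lp_measurable (LpB gp fp)| exact: distrC].
Qed.

Lemma Lpdist_triangle (f g h : R -> R) : Lp p f -> Lp p g -> Lp p h ->
  Lpdist p f h <= Lpdist p f g + Lpdist p g h.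
Proof.
move=> fp gp hp; rewrite -lee_fin EFinD !Lpdist_Lnorm //.
have -> : f \- h = (f \- g) \+ (g \- h) by apply/funext => x /=; rewrite addrA subrK.
by apply: minkowski_EFin => //; apply: Lp_measurable; exact: LpB.
Qed.

Section Completeness.
Variables (c : nat -> R -> R) (B : nat -> R).
Hypothesis c_Lp : forall k, Lp p (c k).
Hypothesis c_steps : forall k m,
  \sum_(0 <= j < m) Lpdist p (c (k + j)%N) (c (k + j).+1) <= B k.

Let mc k : measurable_fun setT (c k) := Lp_measurable (c_Lp k).

Let B_ge0 k : 0 <= B k.
Proof. by have := c_steps k 0; rewrite big_geq. Qed.

Let measurable_step k : measurable_fun setT (fun t => `|c k.+1 t - c k t|).
Proof. by apply: measurableT_comp => //; exact: measurable_funB. Qed.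

Let var k m t := \sum_(0 <= j < m) `|c (k + j).+1 t - c (k + j)%N t|.

Let measurable_var k m : measurable_fun setT (var k m).
Proof. by apply: measurable_sum => j; exact: measurable_step. Qed.

Let var_ge0 k m t : 0 <= var k m t.
Proof. exact: sumr_ge0. Qed.

Lemma Lnorm_var_le k m : ('N_p[var k m] <= (B k)%:E)%E.
Proof.
apply: (@le_trans _ _ (\sum_(0 <= j < m) Lpdist p (c (k + j)%N) (c (k + j).+1))%:E);
  last by rewrite lee_fin.
elim: m => [|m IH].
  rewrite big_geq // (_ : EFin \o var k 0 = cst 0%E) ?Lnorm0 //.
  by apply/funext => t; rewrite /= /var big_geq.
have -> : var k m.+1 = var k m \+ (fun t => `|c (k + m).+1 t - c (k + m)%N t|).
  by apply/funext => t; rewrite /var /= big_nat_recr.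
apply: le_trans (minkowski_EFin mu (measurable_var k m) (measurable_step _) p_ge1) _.
rewrite big_nat_recr //= EFinD leeD // Lpdist_sym // Lpdist_Lnorm //.
by apply: Lnorm_le_norm => [||t]; [exact: measurable_step | exact: measurable_funB |
  rewrite normr_id].
Qed.

Let varp k m t := ((`|var k m t| `^ p)%:E : \bar R).

Let measurable_varp k m : measurable_fun setT (varp k m).
Proof. exact: measurable_powR_norm. Qed.

Let varp_ge0 k m t : (0 <= varp k m t)%E.
Proof. by rewrite lee_fin powR_ge0. Qed.

Lemma nondecreasing_varp k t : nondecreasing_seq (fun m => varp k m t).
Proof.
apply/nondecreasing_seqP => m; rewrite lee_fin.
apply: ge0_ler_powR; rewrite ?nnegrE //.
by rewrite !ger0_norm // /var big_nat_recr //= lerDl.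
Qed.

Let V k t := limn (fun m => varp k m t).

Lemma varp_le_V k m t : (varp k m t <= V k t)%E.
Proof.
apply: lime_ge; first exact: ereal_nondecreasing_is_cvgn (nondecreasing_varp k t).
by exists m => // n /= mn; exact: nondecreasing_varp.
Qed.

Lemma measurable_V k : measurable_fun setT (V k).
Proof.
apply: (emeasurable_fun_cvg (fun m => varp k m)) => // t _.
exact: ereal_nondecreasing_is_cvgn (nondecreasing_varp k t).
Qed.

Lemma integral_V_le k : (\int[mu]_t V k t <= ((B k) `^ p)%:E)%E.
Proof.
have le_integral_varp m n : (m <= n)%N ->
    (\int[mu]_t varp k m t <= \int[mu]_t varp k n t)%E.
  move=> mn; apply: ge0_le_integral => //; [exact: measurable_varp..|].
  by move=> t _; exact: nondecreasing_varp.
rewrite /V monotone_convergence //; last 2 first.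
- by move=> m; exact: measurable_varp.
- by move=> t _; exact: nondecreasing_varp.
apply: lime_le; first exact: ereal_nondecreasing_is_cvgn le_integral_varp.
apply: nearW => m; rewrite -poweR_Lnorm_integral -poweR_EFin.
apply: gt0_ler_poweR => //; last exact: Lnorm_var_le.
- by rewrite in_itv /= leey andbT Lnorm_ge0.
- by rewrite in_itv /= leey andbT lee_fin.
Qed.

(* The limit of [c], with a junk value wherever [(c m t)] diverges. *)
Let c_lim t := fine (limn_esup (fun m => (c m t)%:E)).

Lemma measurable_c_lim : measurable_fun setT c_lim.
Proof.
apply: measurableT_comp; first exact: fine_measurable.
by apply: measurable_fun_limn_esup => m; exact/measurable_EFinP.
Qed.

Lemma powR_dist_c_lim_le k t : ((`|c k t - c_lim t| `^ p)%:E <= V k t)%E.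
Proof.
have [->|Vfin] := eqVneq (V k t) +oo%E; first exact: leey.
have V_ge0 : (0 <= V k t)%E by apply: le_trans (varp_le_V k 0 t).
have Vfn : V k t \is a fin_num by rewrite ge0_fin_numE // ltey.
set h := fine (V k t); have h_ge0 : 0 <= h by rewrite fine_ge0.
have var_le m : var k m t <= h `^ p^-1.
  have varp_le : `|var k m t| `^ p <= h by rewrite -lee_fin /h fineK // varp_le_V.
  rewrite -[var k m t]powRr1 // -(mulfV p_neq0) powRrM.
  apply: ge0_ler_powR; rewrite ?nnegrE ?powR_ge0 ?invr_ge0 //.
  by rewrite -(ger0_norm (var_ge0 k m t)).
have [cvg_c dist_le] := cvgn_bounded_variation (fun m => c m t) k _ var_le.
have -> : c_lim t = limn (fun m => c m t).
  rewrite /c_lim is_cvg_limn_esupE; first by rewrite (EFin_lim cvg_c).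
  by apply/cvg_ex; exists (limn (fun m => c m t))%:E; exact: cvg_comp cvg_c _.
rewrite -(fineK Vfn) lee_fin -/h -[h in _ <= h]powRr1 // -(mulVf p_neq0) powRrM.
by apply: ge0_ler_powR; rewrite ?nnegrE ?powR_ge0.
Qed.

Lemma Lnorm_dist_c_lim_le k : ('N_p[c k \- c_lim] <= (B k)%:E)%E.
Proof.
rewrite LnormE; apply: (@le_trans _ _ (((B k) `^ p)%:E `^ p^-1)%E).
  apply: gt0_ler_poweR; rewrite ?invr_ge0 //.
  - by rewrite in_itv /= leey andbT integral_powR_norm_ge0.
  - by rewrite in_itv /= leey andbT lee_fin powR_ge0.
  apply: le_trans (integral_V_le k); apply: ge0_le_integral => //.
  - exact: measurable_powR_norm (measurable_funB (mc k) measurable_c_lim).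
  - exact: measurable_V.
  - by move=> t _; exact: powR_dist_c_lim_le.
by rewrite poweR_EFin -powRrM mulfV // powRr1.
Qed.

Lemma Lp_c_lim : Lp p c_lim.
Proof.
have c_limE : c_lim = c 0%N \- (c 0%N \- c_lim).
  by apply/funext => t /=; rewrite opprB addrC subrK.
rewrite c_limE; apply: LpB (c_Lp 0%N) _.
split; first exact: measurable_funB (mc 0%N) measurable_c_lim.
exact: le_lt_trans (Lnorm_dist_c_lim_le 0%N) (ltry _).
Qed.

Lemma Lp_complete :
  exists f, Lp p f /\ forall k, Lpdist p (c k) f <= B k.
Proof.
exists c_lim; split; first exact: Lp_c_lim.
move=> k; rewrite -lee_fin Lpdist_Lnorm //; last exact: Lp_c_lim.
exact: Lnorm_dist_c_lim_le.
Qed.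

End Completeness.

Section WanderingBall.
Variables (w : R -> R) (J : set R) (n : nat) (beta M : R).
Hypothesis mw : measurable_fun setT w.
Hypothesis w_le : forall t, `|w t| <= M.
Hypothesis mJ : measurable J.
Hypothesis muJ : mu J = 1%E.
Hypothesis beta_gt0 : 0 < beta.
Hypothesis prod_w_ge : forall t, J (t + n%:R) ->
  beta <= \prod_(1 <= k < n.+1) w (t + n%:R - k%:R).
Hypothesis J_wandering : forall t, J (t + n%:R) -> ~ J t.

Let beta_ge0 : 0 <= beta. Proof. exact: ltW. Qed.

Let mindic : measurable_fun setT (\1_J : R -> R).
Proof. exact: measurable_indic. Qed.

Lemma integral_powR_scaled_indic (k : R) :
  'I_p[fun t => k * \1_J t] = (`|k| `^ p)%:E.
Proof.
transitivity (\int[mu]_x ((`|k| `^ p)%:E * (\1_J x)%:E))%E.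
  apply: eq_integral => x _; rewrite -EFinM indicE.
  by case: (x \in J); rewrite /= ?mulr1 ?mulr0 ?normr0 ?powR0.
rewrite ge0_integralZl_EFin ?powR_ge0 //.
- by rewrite integral_indic // setIT -[in RHS](mule1 (_%:E)); congr (_ * _)%E.
- by apply/measurable_EFinP; exact: mindic.
Qed.

Lemma Lp_scaled_indic (k : R) : Lp p (fun t => k * \1_J t).
Proof.
apply: Lp_integral => //; first exact: measurable_funM.
by rewrite integral_powR_scaled_indic ltry.
Qed.

Lemma Lp_iter_Twc (z : R -> R) : Lp p z -> Lp p (iter n (Twc w) z).
Proof.
move=> zp; have mz := Lp_measurable zp.
have mzn : measurable_fun setT (fun t : R => z (t + n%:R)).
  exact: measurableT_comp mz (measurable_addr _).
apply: Lp_integral => //; first exact: measurable_iter_Twc.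
set K := \prod_(1 <= k < n.+1) M.
have K_ge0 : 0 <= K by apply: prodr_ge0 => k _; exact: le_trans (w_le 0).
apply: (@le_lt_trans _ _ (\int[mu]_t ((K `^ p)%:E * (`|z (t + n%:R)| `^ p)%:E))%E).
  apply: ge0_le_integral => //.
  - by apply: measurable_powR_norm; exact: measurable_iter_Twc.
  - by apply: measurable_funeM; exact: measurable_powR_norm.
  move=> t _; rewrite -EFinM lee_fin -powRM //.
  apply: ge0_ler_powR; rewrite ?nnegrE ?mulr_ge0 //.
  rewrite iter_TwcE normrM ler_wpM2r // normr_prod; apply: ler_prod => k _.
  by rewrite normr_ge0 w_le.
rewrite ge0_integralZl_EFin ?powR_ge0 //; last exact: measurable_powR_norm.
apply: lte_mul_pinfty; rewrite ?lee_fin ?powR_ge0 //.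
rewrite (ge0_integral_addr n%:R (fun t => (`|z t| `^ p)%:E)).
- exact: Lp_integral_lty.
- exact: measurable_powR_norm.
- by move=> t; rewrite lee_fin powR_ge0.
Qed.

Lemma Lnorm_restrict_ge {z : R -> R} {C r : R} : 0 <= C -> Lp p z ->
  Lpdist p (fun t => C * \1_J t) z <= r ->
  ((C - r)%:E <= 'N_p[fun t => z t * \1_J t])%E.
Proof.
move=> C_ge0 zp dist_le; set c := fun t => C * \1_J t.
have cp : Lp p c := Lp_scaled_indic C.
have mzJ : measurable_fun setT (fun t => z t * \1_J t).
  exact: measurable_funM (Lp_measurable zp) mindic.
have mzJc : measurable_fun setT ((fun t => z t * \1_J t) \- c).
  exact: measurable_funB mzJ (Lp_measurable cp).
have Nc : 'N_p[c] = C%:E.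
  by rewrite LnormE integral_powR_scaled_indic poweR_EFin -powRrM mulfV // powRr1
    ?ger0_norm.
have N_le : ('N_p[(fun t => z t * \1_J t) \- c] <= r%:E)%E.
  apply: le_trans (_ : 'N_p[c \- z] <= r%:E)%E; last by rewrite -Lpdist_Lnorm.
  apply: Lnorm_le_norm => // [|t].
    exact: measurable_funB (Lp_measurable cp) (Lp_measurable zp).
  rewrite /= /c indicE; case: (t \in J) => /=; first by rewrite !mulr1 distrC.
  by rewrite !mulr0 subr0 normr0 normr_ge0.
have := lerB_LnormD mu (Lp_measurable cp) mzJc p_ge1.
rewrite (_ : c \+ (_ \- c) = fun t => z t * \1_J t); last first.
  by apply/funext => t /=; rewrite addrC subrK.
apply: le_trans; rewrite Nc.
have Nfin : 'N_p[(fun t => z t * \1_J t) \- c] \is a fin_num.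
  by rewrite ge0_fin_numE ?Lnorm_ge0 // (le_lt_trans N_le) // ltry.
move: N_le; rewrite -(fineK Nfin) -EFinB !lee_fin; lra.
Qed.

Lemma integral_iter_Twc_ge {z : R -> R} : measurable_fun setT z ->
  ((beta `^ p)%:E * 'I_p[fun t => z t * \1_J t] <= 'I_p[iter n (Twc w) z \- \1_J])%E.
Proof.
move=> mz; set u := fun t => z t * \1_J t.
have mu_ : measurable_fun setT u by exact: measurable_funM.
have mun : measurable_fun setT (fun t : R => u (t + n%:R)).
  exact: measurableT_comp mu_ (measurable_addr _).
rewrite -(ge0_integral_addr n%:R (fun t => (`|u t| `^ p)%:E)); last 2 first.
- exact: measurable_powR_norm.
- by move=> t; rewrite lee_fin powR_ge0.
rewrite -ge0_integralZl_EFin ?powR_ge0 //; last exact: measurable_powR_norm.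
apply: ge0_le_integral => //.
- by move=> t _; rewrite -EFinM lee_fin mulr_ge0 ?powR_ge0.
- by apply: measurable_funeM; exact: measurable_powR_norm.
- apply: measurable_powR_norm; apply: measurable_funB => //; exact: measurable_iter_Twc.
move=> t _; rewrite -EFinM lee_fin -powRM //.
apply: ge0_ler_powR; rewrite ?nnegrE ?mulr_ge0 //.
have [Jtn|nJtn] := pselect (J (t + n%:R)); last first.
  by rewrite /u indicE memNset // mulr0 normr0 mulr0.
rewrite /u indicE (mem_set Jtn) mulr1 /= [\1_J t]indicE memNset ?subr0; last first.
  exact: J_wandering.
rewrite iter_TwcE normrM ler_wpM2r //.
exact: le_trans (prod_w_ge _ Jtn) (ler_norm _).
Qed.

Lemma Lpdist_iter_Twc_indic_ge1 (z : R -> R) : Lp p z ->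
  Lpdist p (fun t => (beta^-1 + 1) * \1_J t) z <= 1 ->
  1 <= Lpdist p (iter n (Twc w) z) \1_J.
Proof.
move=> zp dist_le.
have indicp : Lp p (\1_J : R -> R).
  by rewrite (_ : \1_J = fun t => 1 * \1_J t); [exact: Lp_scaled_indic |
    apply/funext => t; rewrite mul1r].
have zJ_ge : ((beta^-1)%:E <= 'N_p[fun t => z t * \1_J t])%E.
  have C_ge0 : 0 <= beta^-1 + 1 by rewrite addr_ge0 // invr_ge0.
  by have := Lnorm_restrict_ge C_ge0 zp dist_le; rewrite addrK.
have zJ_ge' : ((beta^-1 `^ p)%:E <= 'I_p[fun t => z t * \1_J t])%E.
  rewrite -poweR_Lnorm_integral -poweR_EFin; apply: gt0_ler_poweR => //.
  - by rewrite in_itv /= leey andbT lee_fin invr_ge0.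
  - by rewrite in_itv /= leey andbT Lnorm_ge0.
have I_ge1 : (1 <= 'I_p[iter n (Twc w) z \- \1_J])%E.
  apply: le_trans (integral_iter_Twc_ge (Lp_measurable zp)).
  apply: le_trans (lee_wpmul2l _ zJ_ge'); last by rewrite lee_fin powR_ge0.
  rewrite -EFinM -powRM ?invr_ge0 //.
  by rewrite mulfV ?gt_eqF // powR1.
rewrite -lee_fin Lpdist_Lnorm //; last exact: Lp_iter_Twc.
rewrite LnormE -(poweR1r p^-1); apply: gt0_ler_poweR => //.
- by rewrite invr_ge0.
- by rewrite in_itv /= leey andbT lee_fin.
- by rewrite in_itv /= leey andbT integral_powR_norm_ge0.
Qed.

End WanderingBall.

End LpDistance.

Theorem mainTheorem16 (R : realType) (p : R) (w : R -> R) (l : int) (N : nat) :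
  1 <= p ->
  continuous w ->
  (forall t, 0 < w t) ->
  (exists M : R, forall t, `|w t| <= M) ->
  (exists M : R, forall t, `|(w t)^-1| <= M) ->
  (exists beta : R, 0 < beta /\
     forall (t : R) (n : nat), l%:~R <= t <= l%:~R + 1 ->
       beta <= \prod_(1 <= k < n.+1) w (t - k%:R)) ->
  (forall n : nat, (N <= n)%N ->
     forall t : R, l%:~R <= t <= l%:~R + 1 ->
       ~ (l%:~R <= t + n%:R <= l%:~R + 1)) ->
  ~ sigma_porous_any (Lp p) (Lpdist p)
      [set f | Lp p f /\
         forall n : nat, (N <= n)%N ->
           1 <= Lpdist p (iter n (Twc w) f)
                  (\1_[set t : R | l%:~R <= t <= l%:~R + 1])].
Proof.
move=> p_ge1 w_cont _ [M w_le] _ [beta [beta_gt0 prod_w_ge]] J_wandering.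
set J := [set t : R | l%:~R <= t <= l%:~R + 1].
have JE : J = `[l%:~R, l%:~R + 1]%classic by rewrite set_itvcc.
have mJ : measurable J by rewrite JE; exact: measurable_itv.
have muJ : lebesgue_measure J = 1%E.
  by rewrite JE lebesgue_measure_itv /= lte_fin ltrDl ltr01 -EFinD addrAC subrr add0r.
apply: (ball_not_sigma_porous (Lpdist_xx p_ge1) (Lpdist_triangle p_ge1)
    (Lp_complete p_ge1) _ _ _ (Lp_scaled_indic p_ge1 J mJ muJ (beta^-1 + 1)) ltr01)
  => [z zp dist_le|f []//].
split=> // n Nn; apply: Lpdist_iter_Twc_indic_ge1 zp dist_le => //.
- exact: continuous_measurable_fun.
- by move=> t Jtn; exact: prod_w_ge.
- by move=> t Jtn Jt; exact: J_wandering Nn t Jt Jtn.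
Qed.
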